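(* Let $x,y\in S_n$. Any directed path $\gamma$ from $x$ to $y$ in the Bruhat graph $\Gamma$ is contained in at most one hypercube (subgraph of $\Gamma$ isomorphic to some $\mathcal{H}_m$) whose bottom vertex is $x$ and whose top vertex is $y$.
   Context: $S_n$ is the symmetric group with length function $\ell$ (with respect to simple reflections $s_i=(i\ i{+}1)$) and $T$ its set of transpositions. The Bruhat graph $\Gamma$ is the directed graph on $S_n$ with an edge $w\to tw$ whenever $t\in T$ and $\ell(w)<\ell(tw)$. The hypercube graph $\mathcal{H}_m$ is the directed graph given by the Hasse diagram of the Boolean lattice of subsets of an $m$-element set (edges $A\to A\cup\{a\}$); an $m$-hypercube is a subgraph of $\Gamma$ isomorphic to $\mathcal{H}_m$, and its bottom and top vertices are the images of $\varnothing$ and of the full set. *)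

From mathcomp Require Import all_boot all_order all_fingroup.
Set Implicit Arguments. Unset Strict Implicit. Unset Printing Implicit Defensive.

(* S_n = 'S_n, permutations of 'I_n = {0,...,n-1}.
   Group product in mathcomp: (u * v)%g x = v (u x), i.e. u*v = v o u. *)

Definition is_simple_refl (n : nat) (s : 'S_n) : bool :=
  [exists i : 'I_n, exists j : 'I_n, (val j == (val i).+1) && (s == tperm i j)].

Definition is_transposition (n : nat) (t : 'S_n) : bool :=
  [exists i : 'I_n, exists j : 'I_n, (i != j) && (t == tperm i j)].

Definition word_prod (n : nat) (ws : seq 'S_n) : 'S_n := (\prod_(s <- ws) s)%g.

Definition is_length (n : nat) (w : 'S_n) (k : nat) : Prop :=
  (exists ws : seq 'S_n,
      [/\ all (@is_simple_refl n) ws, size ws = k & word_prod ws = w]) /\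
  (forall ws : seq 'S_n, all (@is_simple_refl n) ws -> word_prod ws = w ->
      k <= size ws).

(* Bruhat graph: edge w -> t w  (t w = t o w = (w * t)%g) with t in T and
   ell(w) < ell(t w). *)
Definition bruhat_edge (n : nat) (w v : 'S_n) : Prop :=
  exists t : 'S_n, [/\ is_transposition t, v = (w * t)%g &
    exists k1 k2, [/\ is_length w k1, is_length v k2 & k1 < k2]].

Fixpoint bruhat_path (n : nat) (x : 'S_n) (p : seq 'S_n) : Prop :=
  match p with
  | [::] => True
  | y :: p' => bruhat_edge x y /\ bruhat_path y p'
  end.

(* a subgraph of Gamma is given by a vertex set V and an edge set E.
   (V, E) is an m-hypercube with bottom x and top y: there is an isomorphism
   phi from the Hasse diagram H_m of the Boolean lattice of subsets of 'I_m
   onto (V, E), (V, E) is a subgraph of Gamma, phi(empty) = x, phi(full) = y. *)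
Definition is_hypercube (n m : nat) (V : {set 'S_n}) (E : {set 'S_n * 'S_n})
    (x y : 'S_n) : Prop :=
  exists phi : {set 'I_m} -> 'S_n,
    [/\ injective phi,
        V = [set phi A | A : {set 'I_m}],
        E = [set (phi A, phi (a |: A)) | A : {set 'I_m}, a : 'I_m in ~: A] /\
          (forall e, e \in E -> bruhat_edge e.1 e.2),
        phi set0 = x & phi setT = y].

Fixpoint path_in (n : nat) (V : {set 'S_n}) (E : {set 'S_n * 'S_n})
    (x : 'S_n) (p : seq 'S_n) : bool :=
  match p with
  | [::] => x \in V
  | y :: p' => (x \in V) && ((x, y) \in E) && path_in V E y p'
  end.

(* The length of w in S_n is the number of inversions of w^-1, and an edge
   w -> w * (e f), e < f, of the Bruhat graph is one with w^-1 e < w^-1 f.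
   A product of two distinct transpositions has at most three factorisations
   into two transpositions, and when it is a 3-cycle on p < q < r the ascent
   conditions rule out one of them; hence two vertices of the Bruhat graph are
   joined by at most two directed paths of length two, and a square of a
   hypercube is determined by three of its vertices.
   A hypercube is the image of an injective map phi on the subsets of
   {0, ..., m-1}, and a path from its bottom to its top follows a maximal chain
   of subsets. After relabelling the coordinates, two hypercubes containing the
   path agree on the initial segments {0, ..., k-1}; induction on the number of
   pairs a < b with a outside and b inside a set, using the squares, propagates
   the agreement to all subsets. *)

From mathcomp Require Import all_boot all_order all_fingroup.
From mathcomp Require Import zify.
Set Implicit Arguments. Unset Strict Implicit. Unset Printing Implicit Defensive.
Local Open Scope group_scope.

Ltac ord_lia :=
  repeat match goal with
  | H : is_true (?x != ?y) |- _ => move/eqP: H => H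
  | H : ~ (@eq _ ?x ?y) |- _ => move/(contra_not (@ord_inj _ x y)): H => H
  end; lia.

Definition inversions n (g : 'S_n) : {set 'I_n * 'I_n} :=
  [set pq : 'I_n * 'I_n | (pq.1 < pq.2) && (g pq.2 < g pq.1)].

Definition ninv n (g : 'S_n) := #|inversions g|.

Lemma ninv1 n : ninv (1 : 'S_n) = 0.
Proof. by apply/eqP; rewrite cards_eq0; apply/eqP/setP => pq; rewrite !inE !perm1; lia. Qed.

Section TpermInversions.
Variables (n : nat) (i j : 'I_n).
Hypothesis lt_ij : i < j.
Local Notation t := (tperm i j).

Definition strictly_between (k : 'I_n) := i < k < j.

Lemma strictly_between_tperm k : strictly_between (t k) = strictly_between k.
Proof. by rewrite /strictly_between; case: tpermP => [->|->|//]; lia. Qed.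

Definition swap_outside (pq : 'I_n * 'I_n) :=
  if strictly_between pq.1 || strictly_between pq.2 then pq else (t pq.1, t pq.2).

Lemma swap_outside_involutive : involutive swap_outside.
Proof.
case=> p q; rewrite /swap_outside /=.
case: (boolP (strictly_between p || strictly_between q)) => [mid | out]; first by rewrite /= mid.
by rewrite /= !strictly_between_tperm (negbTE out) !tpermK.
Qed.

Lemma tperm_ltn_outside (p q : 'I_n) : p < q -> (p, q) != (i, j) ->
  ~~ strictly_between p -> ~~ strictly_between q -> t p < t q.
Proof.
rewrite /strictly_between xpair_eqE => pq ne.
case: tpermP => [ep|ep|ep1 ep2]; case: tpermP => [eq|eq|eq1 eq2];
  subst; rewrite ?eqxx ?andbT ?andbF /= in ne *; ord_lia.
Qed.

(* The swap with [t] is order-preserving on pairs avoiding the open interval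
   (i, j); pairs meeting it can only lose inversions when [g j < g i]. *)
Lemma swap_outside_inversions (g : 'S_n) pq :
  g j < g i \/ j = i.+1 :> nat ->
  pq \in inversions (t * g) :\ (i, j) -> swap_outside pq \in inversions g :\ (i, j).
Proof.
move=> hg; case: pq => p q; rewrite !inE /= !permM xpair_eqE => /andP [ne /andP [pq gpq]].
rewrite /swap_outside /=; case: ifP => [mid | out].
- have gji : g j < g i by case: hg => // ji; move: mid; rewrite /strictly_between ji; lia.
  rewrite /= ne pq /=; move: mid gpq; rewrite /strictly_between.
  by case: tpermP => [ep|ep|ep1 ep2]; case: tpermP => [eq|eq|eq1 eq2]; subst; ord_lia.
- move/negbT: out; rewrite negb_or => /andP [outp outq].
  rewrite tperm_ltn_outside ?xpair_eqE // gpq andbT.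
  rewrite -[X in t p == X](tpermR i j) -[X in t q == X](tpermL i j) !(inj_eq perm_inj) andbT.
  by apply/negP => /andP [/eqP pj /eqP qi]; subst; lia.
Qed.

Lemma ninv_tperm_setD1 (g : 'S_n) : g j < g i \/ j = i.+1 :> nat ->
  #|inversions (t * g) :\ (i, j)| <= #|inversions g :\ (i, j)|.
Proof.
move=> hg; rewrite -(card_imset _ (inv_inj swap_outside_involutive)).
by apply/subset_leq_card/subsetP => _ /imsetP [pq inv ->]; apply: swap_outside_inversions.
Qed.

End TpermInversions.

Lemma ninv_tperm_inversion n (i j : 'I_n) (g : 'S_n) :
  i < j -> g j < g i -> ninv (tperm i j * g) < ninv g.
Proof.
move=> ij gji; have := ninv_tperm_setD1 ij (or_introl gji : g j < g i \/ _).
rewrite /ninv (cardsD1 (i, j) (inversions g)) (cardsD1 (i, j) (inversions _)).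
have gij : (g i < g j) = false by lia.
by rewrite !inE /= !permM tpermL tpermR ij gji gij.
Qed.

Lemma ninv_tperm_adjacent n (i j : 'I_n) (g : 'S_n) :
  j = i.+1 :> nat -> ninv (tperm i j * g) <= (ninv g).+1.
Proof.
move=> ji; have lt_ij : i < j by lia.
have := ninv_tperm_setD1 lt_ij (or_intror ji : g j < g i \/ _).
rewrite /ninv (cardsD1 (i, j) (inversions g)) (cardsD1 (i, j) (inversions _)).
by case: (_ \in _); case: (_ \in _) => /= h; rewrite ?add0n ?add1n ?ltnS; do ?apply: leqW.
Qed.

Lemma word_prod_rcons n (ws : seq 'S_n) s : word_prod (rcons ws s) = word_prod ws * s.
Proof. by rewrite /word_prod -cats1 big_cat big_seq1. Qed.

Lemma is_simple_reflP n (s : 'S_n) :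
  reflect (exists i j : 'I_n, j = i.+1 :> nat /\ s = tperm i j) (is_simple_refl s).
Proof.
apply: (iffP existsP) => [[i /existsP [j /andP [/eqP ji /eqP ->]]] | [i [j [ji ->]]]].
  by exists i, j.
by exists i; apply/existsP; exists j; rewrite -ji !eqxx.
Qed.

Lemma ninv_word_prod n (ws : seq 'S_n) :
  all (@is_simple_refl n) ws -> ninv (word_prod ws)^-1 <= size ws.
Proof.
elim/last_ind: ws => [|ws s IH]; first by rewrite /word_prod big_nil invg1 ninv1.
rewrite all_rcons => /andP [/is_simple_reflP [i [j [ji ->]]] /IH le_ws].
rewrite word_prod_rcons invMg tpermV size_rcons.
exact: leq_trans (ninv_tperm_adjacent _ ji) _.
Qed.

Lemma increasing_perm_id n (g : 'S_n) :
  (forall i j : 'I_n, j = i.+1 :> nat -> g i < g j) -> g = 1.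
Proof.
move=> incr.
have ge_id k (x : 'I_n) : x = k :> nat -> k <= g x.
  elim: k x => [|k IH] x xk; first lia.
  have kn : k < n by have := ltn_ord x; lia.
  by have := incr (Ordinal kn) x xk; have := IH (Ordinal kn) erefl; rewrite /=; lia.
have le_id k (x : 'I_n) : x + k = n.-1 -> g x <= x.
  elim: k x => [|k IH] x xk; first by have := ltn_ord (g x); lia.
  have xn : x.+1 < n by have := ltn_ord x; lia.
  have := incr x (Ordinal xn) erefl; have := IH (Ordinal xn) (ltac:(rewrite /=; lia)).
  by rewrite /=; lia.
apply/permP => x; apply/val_inj; rewrite perm1 /=.
have := ge_id _ x erefl; have := le_id (n.-1 - x) x (ltac:(have := ltn_ord x; lia)); lia.
Qed.

Lemma exists_adjacent_descent n (g : 'S_n) : g != 1 ->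
  exists i j : 'I_n, j = i.+1 :> nat /\ g j < g i.
Proof.
move=> g1; suff /existsP [i /existsP [j /andP [/eqP ji gji]]] :
    [exists i : 'I_n, exists j : 'I_n, (j == i.+1 :> nat) && (g j < g i)].
  by exists i, j.
apply: contraNT g1 => /existsPn no_descent.
apply/eqP/increasing_perm_id => i j ji.
have : g i != g j by rewrite (inj_eq perm_inj); apply/eqP => eij; subst; lia.
rewrite -val_eqE /=; case: ltngtP => // gji _.
by have /existsPn/(_ j) := no_descent i; rewrite ji eqxx gji.
Qed.

Lemma exists_word_ninv n (w : 'S_n) :
  exists ws, [/\ all (@is_simple_refl n) ws, size ws = ninv w^-1 & word_prod ws = w].
Proof.
have [k] := ubnP (ninv w^-1); elim: k w => // k IH w lt_wk.
have [->|w1] := eqVneq w 1.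
  by exists [::]; rewrite invg1 ninv1 /word_prod big_nil.
have [i [j [ji gji]]] : exists i j : 'I_n, j = i.+1 :> nat /\ w^-1 j < w^-1 i.
  by apply: exists_adjacent_descent; rewrite invg_eq1.
have ij : i < j by lia.
have tw : (w * tperm i j)^-1 = tperm i j * w^-1 by rewrite invMg tpermV.
have lt_t := ninv_tperm_inversion ij gji.
have le_t := ninv_tperm_adjacent (tperm i j * w^-1) ji.
rewrite mulgA tperm2 mul1g in le_t.
have [ws [simple_ws size_ws prod_ws]] := IH (w * tperm i j) (ltac:(rewrite tw; lia)).
exists (rcons ws (tperm i j)); split.
- by rewrite all_rcons simple_ws andbT; apply/is_simple_reflP; exists i, j.
- by rewrite size_rcons size_ws tw; lia.
- by rewrite word_prod_rcons prod_ws -mulgA tperm2 mulg1.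
Qed.

Lemma is_length_ninv n (w : 'S_n) k : is_length w k -> k = ninv w^-1.
Proof.
case=> [[ws [simple_ws <- <-]] minimal].
have [ws' [simple_ws' size_ws' prod_ws']] := exists_word_ninv (word_prod ws).
by have := minimal ws' simple_ws' prod_ws'; have := ninv_word_prod simple_ws; lia.
Qed.

Lemma bruhat_edge_ninv n (u v : 'S_n) : bruhat_edge u v -> ninv u^-1 < ninv v^-1.
Proof. by case=> t [_ _ [k1 [k2 [/is_length_ninv <- /is_length_ninv <-]]]]. Qed.

Lemma bruhat_edge_ascent n (u v : 'S_n) : bruhat_edge u v ->
  exists e f : 'I_n, [/\ e < f, v = u * tperm e f & u^-1 e < u^-1 f].
Proof.
move=> uv; move: (bruhat_edge_ninv uv).
case: uv => _ [/existsP [i /existsP [j /andP [ij /eqP ->]]] -> _] lt_uv.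
wlog lt_ij : i j ij lt_uv / i < j.
  move=> wlog_ij; case: (ltngtP i j) => [|ji|/ord_inj eij]; first exact: wlog_ij.
    by rewrite tpermC in lt_uv *; apply: wlog_ij => //; rewrite eq_sym.
  by rewrite eij eqxx in ij.
exists i, j; split => //; case: ltngtP => // [gji|/ord_inj/perm_inj eij].
  by move: lt_uv; rewrite invMg tpermV ltnNge ltnW // ninv_tperm_inversion.
by rewrite eij eqxx in ij.
Qed.

Lemma tpermE n (i j x : 'I_n) :
  tperm i j x = if x == i then j else if x == j then i else x.
Proof. by case: tpermP => [->|->|/eqP/negbTE -> /eqP/negbTE ->]; rewrite ?eqxx //; case: eqP. Qed.

(* Decides a statement about the values of transpositions at finitely many
   named points, by case analysis on all coincidences among those points. *)
Ltac tperm_cases :=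
  let rec split_eqs :=
    rewrite ?eqxx /=;
    try match goal with
    | |- context [?x == ?y] => is_var x; is_var y;
        let H := fresh in
        case: (eqVneq x y) => H;
          [subst; split_eqs
          | rewrite ?(negbTE H); rewrite eq_sym in H; rewrite ?(negbTE H); split_eqs]
    end in
  rewrite ?permM ?tpermE; split_eqs; try ord_lia; try done.

Definition disjoint_pairs n (e f e' f' : 'I_n) := [&& e != e', e != f', f != e' & f != f'].

Section TwoTranspositions.
Variables (n : nat) (e f e' f' : 'I_n).
Hypotheses (lt_ef : e < f) (lt_ef' : e' < f') (neq_ef : (e, f) != (e', f')).
Local Notation c := (tperm e f * tperm e' f').

Lemma tperm_mul_moved : [/\ c e != e, c f != f, c e' != e' & c f' != f'].
Proof. by move: lt_ef lt_ef' neq_ef; rewrite xpair_eqE; tperm_cases. Qed.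

Lemma tperm_mul_support x : c x != x -> x \in [:: e; f; e'; f'].
Proof. by rewrite !inE; tperm_cases. Qed.

Lemma disjoint_tperm_mul : disjoint_pairs e f e' f' ->
  [/\ c e = f, c e' = f' & forall x, c (c x) = x].
Proof. by rewrite /disjoint_pairs => disj; split => [||x]; move: disj; tperm_cases. Qed.

Lemma overlapping_tperm_mul : ~~ disjoint_pairs e f e' f' -> c (c e) != e.
Proof. by move: lt_ef lt_ef' neq_ef; rewrite /disjoint_pairs xpair_eqE; tperm_cases. Qed.

Lemma involutive_tperm_mul : (forall x, c (c x) = x) -> c e = f.
Proof.
move=> invol; have [/disjoint_tperm_mul [] // | overlap] := boolP (disjoint_pairs e f e' f').
by have := overlapping_tperm_mul overlap; rewrite invol eqxx.
Qed.

Lemma overlapping_tperm_mul_support : ~~ disjoint_pairs e f e' f' ->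
  exists2 o, (o != e) && (o != f) & forall x, c x != x -> x \in [:: e; f; o].
Proof.
move=> overlap; exists (if (e' == e) || (e' == f) then f' else e').
  by move: overlap lt_ef lt_ef' neq_ef; rewrite /disjoint_pairs xpair_eqE; tperm_cases.
move=> x /tperm_mul_support; move: overlap lt_ef lt_ef' neq_ef.
by rewrite /disjoint_pairs xpair_eqE !inE; tperm_cases.
Qed.

End TwoTranspositions.

Lemma disjoint_tperm_mul_factors n (e f e' f' a b a' b' : 'I_n) :
  e < f -> e' < f' -> (e, f) != (e', f') -> disjoint_pairs e f e' f' ->
  a < b -> a' < b' -> (a, b) != (a', b') ->
  tperm a b * tperm a' b' = tperm e f * tperm e' f' ->
  (a, b) = (e, f) \/ (a, b) = (e', f').
Proof.
move=> ef ef' ne disj ab ab' neq cab.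
have [ma _ _ _] := tperm_mul_moved ab ab' neq.
have supp := tperm_mul_support ef ef' ne.
have [ce ce' invol] := disjoint_tperm_mul ef ef' ne disj.
have ca : (tperm a b * tperm a' b') a = b.
  by apply: involutive_tperm_mul => // x; rewrite cab.
rewrite cab in ma ca; set c := tperm e f * tperm e' f' in ma ca ce ce' invol supp.
move: (supp _ ma) ca ab; rewrite !inE => /or4P [] /eqP ->.
- by rewrite ce => ->; left.
- by rewrite -{1}ce invol => <-; lia.
- by rewrite ce' => ->; right.
- by rewrite -{1}ce' invol => <-; lia.
Qed.

Definition ascending_pair n (G : 'S_n) (e f : 'I_n) := (e < f) && (G e < G f).

(* [two_ascents u^-1 (u^-1 * w) e f] encodes a Bruhat path
   [u -> u * tperm e f -> w] (see [bruhat_two_path_ascents]). *)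
Definition two_ascents n (G c : 'S_n) (e f : 'I_n) : Prop :=
  exists e' f', [/\ c = tperm e f * tperm e' f', (e, f) != (e', f'),
    ascending_pair G e f & ascending_pair (tperm e f * G) e' f'].

Lemma sort3 n (a b o : 'I_n) : a != b -> a != o -> b != o ->
  exists p q r : 'I_n, p < q < r /\ {subset [:: a; b; o] <= [:: p; q; r]}.
Proof.
move=> ab ao bo.
have conclude (p q r : 'I_n) : p < q < r -> {subset [:: a; b; o] <= [:: p; q; r]} ->
  exists p q r : 'I_n, p < q < r /\ {subset [:: a; b; o] <= [:: p; q; r]}.
  by move=> pqr sub; exists p, q, r.
case: (ltngtP a b) => ?; case: (ltngtP a o) => ?; case: (ltngtP b o) => ?;
  try (exfalso; ord_lia);
  first [ apply: (conclude a b o); first lia | apply: (conclude a o b); first lia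
        | apply: (conclude b a o); first lia | apply: (conclude b o a); first lia
        | apply: (conclude o a b); first lia | apply: (conclude o b a); first lia ];
  by move=> x; rewrite !inE => /or3P [] /eqP ->; rewrite eqxx ?orbT.
Qed.

Lemma pair_in_triple n (p q r e f : 'I_n) : p < q < r -> e < f ->
  e \in [:: p; q; r] -> f \in [:: p; q; r] ->
  [\/ (e, f) = (p, q), (e, f) = (q, r) | (e, f) = (p, r)].
Proof.
move=> pqr ef; rewrite !inE => /or3P [] /eqP ? /or3P [] /eqP ?; subst;
  first [by constructor 1 | by constructor 2 | by constructor 3 | lia].
Qed.

(* For the extreme pair [(p, r)] the second transposition moves [q] and one
   of [p], [r], which is compatible with ascents only if [G] is not increasing
   on [p < q < r]. *)
Lemma ascents_in_triple n (G c : 'S_n) (p q r e f : 'I_n) : p < q < r ->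
  (forall x, c x != x -> x \in [:: p; q; r]) -> two_ascents G c e f ->
  [\/ (e, f) = (p, q) /\ G p < G q, (e, f) = (q, r) /\ G q < G r
    | (e, f) = (p, r) /\ (G r < G q \/ G q < G p)].
Proof.
move=> pqr supp [e' [f' [ce ne /andP [ef Gef] /andP [ef' Gef']]]]; subst c.
have [me mf me' mf'] := tperm_mul_moved ef ef' ne.
case: (pair_in_triple pqr ef (supp _ me) (supp _ mf)) => [] [? ?]; subst e f.
- by constructor 1.
- by constructor 2.
constructor 3; split => //.
have [pq qr] : p != q /\ q != r by split; apply/eqP => eq; subst; lia.
case: (pair_in_triple pqr ef' (supp _ me') (supp _ mf')) => [] [? ?]; subst e' f'.
- by left; move: Gef'; rewrite !permM tpermL tpermD // eq_sym.
- by right; move: Gef'; rewrite !permM tpermR tpermD // eq_sym.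
- by rewrite eqxx in ne.
Qed.

Lemma two_ascents_at_most_two n (G c : 'S_n) (e1 f1 e2 f2 e3 f3 : 'I_n) :
  two_ascents G c e1 f1 -> two_ascents G c e2 f2 -> two_ascents G c e3 f3 ->
  (e1, f1) != (e2, f2) -> (e1, f1) != (e3, f3) -> (e2, f2) = (e3, f3).
Proof.
move=> asc1 asc2 asc3 ne12 ne13.
have [e1' [f1' [c1 ne1 /andP [ef1 _] /andP [ef1' _]]]] := asc1.
have [disj | overlap] := boolP (disjoint_pairs e1 f1 e1' f1').
  have factor e f : two_ascents G c e f -> (e, f) = (e1, f1) \/ (e, f) = (e1', f1').
    case=> e' [f' [ce ne /andP [ef _] /andP [ef' _]]].
    by apply: (disjoint_tperm_mul_factors ef1 ef1' ne1 disj ef ef' ne); rewrite -ce.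
  by move: ne12 ne13; case: (factor _ _ asc2) (factor _ _ asc3) => [] -> [] ->;
    rewrite ?eqxx.
have [o /andP [o_e o_f] suppo] := overlapping_tperm_mul_support ef1 ef1' ne1 overlap.
rewrite -c1 in suppo.
have e1f1 : e1 != f1 by rewrite neq_ltn ef1.
have e1o : e1 != o by rewrite eq_sym.
have f1o : f1 != o by rewrite eq_sym.
have [p [q [r [pqr sub]]]] := sort3 e1f1 e1o f1o.
have supp x : c x != x -> x \in [:: p; q; r] by move/suppo/sub.
move: ne12 ne13.
case: (ascents_in_triple pqr supp asc1) => [] [-> ?];
  case: (ascents_in_triple pqr supp asc2) => [] [-> ?];
  case: (ascents_in_triple pqr supp asc3) => [] [-> ?];
  rewrite ?eqxx // => _ _; exfalso; lia.
Qed.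

Lemma bruhat_two_path_ascents n (u v w : 'S_n) : bruhat_edge u v -> bruhat_edge v w ->
  exists e f, v = u * tperm e f /\ two_ascents u^-1 (u^-1 * w) e f.
Proof.
move=> uv vw; have lt_uw := ltn_trans (bruhat_edge_ninv uv) (bruhat_edge_ninv vw).
have [e [f [ef ve Gef]]] := bruhat_edge_ascent uv.
have [e' [f' [ef' wv Gef']]] := bruhat_edge_ascent vw.
subst v w; exists e, f; split => //; exists e', f'; split.
- by rewrite !mulgA mulVg mul1g.
- by apply: contraTneq lt_uw => -[<- <-]; rewrite -mulgA tperm2 mulg1 ltnn.
- by rewrite /ascending_pair ef.
- by move: Gef'; rewrite /ascending_pair ef' invMg tpermV !permM.
Qed.

Lemma bruhat_square n (u v w z1 z2 : 'S_n) :
  bruhat_edge u v -> bruhat_edge v w -> bruhat_edge u z1 -> bruhat_edge z1 w ->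
  bruhat_edge u z2 -> bruhat_edge z2 w -> v != z1 -> v != z2 -> z1 = z2.
Proof.
move=> uv vw uz1 z1w uz2 z2w.
have [e1 [f1 [-> asc1]]] := bruhat_two_path_ascents uv vw.
have [e2 [f2 [-> asc2]]] := bruhat_two_path_ascents uz1 z1w.
have [e3 [f3 [-> asc3]]] := bruhat_two_path_ascents uz2 z2w.
move=> ne12 ne13; suff [-> ->] : (e2, f2) = (e3, f3) by [].
apply: (two_ascents_at_most_two asc1 asc2 asc3).
  by apply: contraNneq ne12 => -[-> ->].
by apply: contraNneq ne13 => -[-> ->].
Qed.

Definition prefix_set m k : {set 'I_m} := [set j : 'I_m | j < k].

Definition set_inversions m (B : {set 'I_m}) : {set 'I_m * 'I_m} :=
  [set ab : 'I_m * 'I_m | [&& ab.1 \notin B, ab.2 \in B & ab.1 < ab.2]].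

Lemma set_inversions_eq0 m (B : {set 'I_m}) :
  set_inversions B = set0 -> exists2 k, k <= m & B = prefix_set m k.
Proof.
move=> inv0.
have sorted_B a b : a \notin B -> b \in B -> a < b -> False.
  by move=> aB bB ab; have := in_set0 (a, b); rewrite -inv0 inE /= aB bB ab.
case: (pickP [pred a | a \notin B]) => [a0 a0B | allB]; last first.
  by exists m => //; apply/setP => j; rewrite inE ltn_ord; apply/negbFE/allB.
have [a aB amin] := arg_minnP (fun i : 'I_m => nat_of_ord i) a0B.
exists a; first exact: ltnW (ltn_ord a).
apply/setP => j; rewrite inE; apply/idP/idP => [jB | ja]; last first.
  by apply/negPn/negP => /amin; lia.
rewrite ltnNge leq_eqVlt negb_or; apply/andP; split.
  by apply: contraL jB => /eqP/ord_inj <-.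
by apply/negP => /(sorted_B a j aB jB).
Qed.

Lemma set_inversions_proper m (B C : {set 'I_m}) (a b : 'I_m) :
  a \notin B -> (forall x, x \notin B -> a <= x) ->
  b \in B -> (forall y, y \in B -> y <= b) -> a < b ->
  B :\ b \subset C -> C \subset a |: B -> (a \in C) || (b \notin C) ->
  set_inversions C \proper set_inversions B.
Proof.
move=> aB amin bB bmax ab /subsetP sub_C /subsetP C_sub ab_C.
apply/properP; split; last first.
  exists (a, b); first by rewrite inE /= aB bB ab.
  by rewrite inE /=; case/orP: ab_C => [-> | /negbTE ->]; rewrite ?andbF.
apply/subsetP => -[x y]; rewrite !inE /= => /and3P [xC yC xy].
have xB : x \notin B.
  apply: contra xC => xB; have [xb | xb] := eqVneq x b; last first.
    by apply: sub_C; rewrite !inE xb.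
  subst x; have := C_sub _ yC; rewrite !inE => /orP [/eqP ya | /bmax]; [subst y|]; lia.
have yB : y \in B.
  have := C_sub _ yC; rewrite !inE => /orP [/eqP ya | //]; subst.
  by have := amin _ xB; lia.
by rewrite xB yB.
Qed.

Definition bruhat_cube_map n m (phi : {set 'I_m} -> 'S_n) :=
  forall (B : {set 'I_m}) b, b \notin B -> bruhat_edge (phi B) (phi (b |: B)).

(* Induction on the number of set inversions of [B]: [bruhat_square] moves the
   agreement of [phi] and [psi] from three sets with fewer inversions to [B]. *)
Lemma bruhat_cube_maps_eq n m (phi psi : {set 'I_m} -> 'S_n) :
  injective phi -> injective psi -> bruhat_cube_map phi -> bruhat_cube_map psi ->
  (forall k, k <= m -> phi (prefix_set m k) = psi (prefix_set m k)) -> phi =1 psi.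
Proof.
move=> inj_phi inj_psi cube_phi cube_psi on_prefixes B.
have [N] := ubnP #|set_inversions B|; elim: N B => // N IH B lt_BN.
have [inv0 | /set0Pn [[a0 b0]]] := eqVneq (set_inversions B) set0.
  by have [k km ->] := set_inversions_eq0 inv0; apply: on_prefixes.
rewrite inE /= => /and3P [a0B b0B ab0].
have [a aB amin] := @arg_minnP _ a0 [pred i | i \notin B] (@nat_of_ord m) a0B.
have [b bB bmax] := @arg_maxnP _ b0 [pred i | i \in B] (@nat_of_ord m) b0B.
move: aB bB => /= aB bB.
have ab : a < b by have := amin _ a0B; have := bmax _ b0B; lia.
have fewer (C : {set 'I_m}) : B :\ b \subset C -> C \subset a |: B -> (a \in C) || (b \notin C) ->
    phi C = psi C.
  move=> subC Csub abC; apply/IH/(leq_trans _ (ltnSE lt_BN)).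
  exact/proper_card/(set_inversions_proper aB amin bB bmax ab subC Csub abC).
have aBb : a \notin B :\ b by rewrite !inE negb_and aB orbT.
have ab_neq : a != b by rewrite neq_ltn ab.
have BbU : B :\ b \subset a |: B by apply/subsetP => x /setD1P [_ xB]; rewrite !inE xB orbT.
have eq_u : phi (B :\ b) = psi (B :\ b) by apply: fewer; rewrite ?subxx ?setD11 ?orbT.
have eq_v : phi (a |: (B :\ b)) = psi (a |: (B :\ b)).
  by apply: fewer; rewrite ?subsetUr ?setU11 ?setUS ?subsetDl.
have eq_w : phi (a |: B) = psi (a |: B) by apply: fewer; rewrite ?subxx ?setU11.
have add_b : b |: (a |: (B :\ b)) = a |: B by rewrite setUCA setD1K.
have BbK : b |: (B :\ b) = B by rewrite setD1K.
apply: (@bruhat_square _ (phi (B :\ b)) (phi (a |: (B :\ b))) (phi (a |: B))).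
- exact: cube_phi.
- by rewrite -add_b; apply: cube_phi; rewrite !inE eqxx /= orbF eq_sym.
- by rewrite -{2}BbK; apply: cube_phi; rewrite !inE eqxx.
- exact: cube_phi.
- by rewrite eq_u -{2}BbK; apply: cube_psi; rewrite !inE eqxx.
- by rewrite eq_w; apply: cube_psi.
- by rewrite (inj_eq inj_phi); apply: contraNneq aB => <-; rewrite setU11.
- by rewrite eq_v (inj_eq inj_psi); apply: contraNneq aB => <-; rewrite setU11.
Qed.

Definition cube_vertices n m (phi : {set 'I_m} -> 'S_n) : {set 'S_n} :=
  [set phi A | A : {set 'I_m}].

Definition cube_edges n m (phi : {set 'I_m} -> 'S_n) : {set 'S_n * 'S_n} :=
  [set (phi A, phi (a |: A)) | A : {set 'I_m}, a : 'I_m in ~: A].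

Lemma cube_path_chain n m (phi : {set 'I_m} -> 'S_n) (V : {set 'S_n}) p A :
  injective phi -> path_in V (cube_edges phi) (phi A) p ->
  exists s : seq 'I_m, [/\ uniq s, all [predC A] s, size s = size p &
    forall k, k <= size p -> nth (phi A) (phi A :: p) k = phi (A :|: [set:: take k s])].
Proof.
move=> inj_phi; elim: p A => [|y p IH] A /=.
  by move=> _; exists [::]; split => // k; rewrite leqn0 => /eqP -> /=; rewrite set_nil setU0.
case/andP => [/andP [_ /imset2P [B a _ aB [/inj_phi eqAB ->]]] path_p].
subst B; rewrite in_setC in aB.
have [s [uniq_s /allP s_out size_s nth_s]] := IH _ path_p.
have a_s : a \notin s by apply/negP => /s_out; rewrite !inE eqxx.
exists (a :: s); split => /=.
- by rewrite a_s.
- apply/andP; split=> //; apply/allP => x /s_out; rewrite !inE negb_or.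
  by case/andP.
- by rewrite size_s.
case=> [_ | k]; first by rewrite set_nil setU0.
rewrite ltnS => kp; rewrite (set_nth_default (phi (a |: A))) /=; last lia.
by rewrite nth_s // set_cons setUCA setUA.
Qed.

Lemma cube_maximal_path n m (phi : {set 'I_m} -> 'S_n) (V : {set 'S_n}) x y p :
  injective phi -> phi set0 = x -> phi setT = y ->
  path_in V (cube_edges phi) x p -> last x p = y ->
  m = size p /\ exists s : {perm 'I_m},
    forall k, k <= m -> phi (s @: prefix_set m k) = nth x (x :: p) k.
Proof.
move=> inj_phi phi0 phiT path_p last_p; rewrite -phi0 in path_p.
have [s [uniq_s _ size_s nth_s]] := cube_path_chain inj_phi path_p.
have s_full : [set:: s] = setT.
  apply: inj_phi; rewrite phiT -last_p (last_nth x) -phi0 nth_s // set0U.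
  by rewrite -size_s take_size.
have size_sm : size s = m.
  by move/card_uniqP: uniq_s => <-; rewrite -cardsE s_full cardsT card_ord.
split; first by rewrite -size_sm.
pose f (j : 'I_m) := nth j s j.
have inj_f : injective f.
  move=> j k; rewrite /f (set_nth_default k); last by rewrite size_sm.
  by move/eqP; rewrite nth_uniq ?size_sm // => /eqP/ord_inj.
exists (perm inj_f) => k km; rewrite -phi0 nth_s; last by rewrite -size_s size_sm.
rewrite set0U; congr phi; apply/setP => z; rewrite !inE in_take_leq ?size_sm //.
apply/imsetP/idP => [[j] | zk].
  by rewrite inE permE /f => jk ->; rewrite index_uniq // size_sm.
have zm : index z s < m := leq_trans zk km.
exists (Ordinal zm); first by rewrite inE.
by rewrite permE /f /= nth_index // -index_mem size_sm.
Qed.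

Lemma bruhat_cube_map_edges n m (phi : {set 'I_m} -> 'S_n) :
  (forall e, e \in cube_edges phi -> bruhat_edge e.1 e.2) -> bruhat_cube_map phi.
Proof. by move=> edges B b bB; apply: (edges (_, _)); apply/imset2P; exists B b; rewrite ?inE. Qed.

Section CubeRelabelling.
Variables (n m : nat) (phi : {set 'I_m} -> 'S_n) (s : {perm 'I_m}).
Local Notation phi_s := (fun A : {set 'I_m} => phi (s @: A)).

Lemma perm_imsetK (A : {set 'I_m}) : s @: (s^-1 @: A) = A.
Proof. by rewrite -imset_comp (eq_imset _ (permKV s)) imset_id. Qed.

Lemma cube_vertices_relabel : cube_vertices phi_s = cube_vertices phi.
Proof.
apply/setP => v; apply/imsetP/imsetP => [[A _ ->] | [A _ ->]]; first by exists (s @: A).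
by exists (s^-1 @: A); rewrite ?perm_imsetK.
Qed.

Lemma cube_edges_relabel : cube_edges phi_s = cube_edges phi.
Proof.
apply/setP => uv; apply/imset2P/imset2P => [[A a _ aA ->] | [A a _ aA ->]].
  exists (s @: A) (s a); rewrite ?imsetU1 //.
  by rewrite in_setC (mem_imset _ _ (@perm_inj _ s)) -in_setC.
apply: (Imset2spec (x1 := s^-1 @: A) (x2 := s^-1 a)) => //.
  by rewrite in_setC (mem_imset _ _ (@perm_inj _ s^-1)) -in_setC.
by rewrite imsetU1 permKV perm_imsetK.
Qed.

Lemma injective_relabel : injective phi -> injective phi_s.
Proof. by move=> inj_phi A B /inj_phi/(imset_inj (@perm_inj _ s)). Qed.

Lemma bruhat_cube_map_relabel : bruhat_cube_map phi -> bruhat_cube_map phi_s.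
Proof. by move=> cube B b bB; rewrite imsetU1; apply: cube; rewrite (mem_imset _ _ (@perm_inj _ s)). Qed.

End CubeRelabelling.

Theorem lemma3p3 (n : nat) (x y : 'S_n) (p : seq 'S_n) :
  bruhat_path x p -> last x p = y ->
  forall (m1 m2 : nat) (V1 V2 : {set 'S_n}) (E1 E2 : {set 'S_n * 'S_n}),
    is_hypercube m1 V1 E1 x y -> is_hypercube m2 V2 E2 x y ->
    path_in V1 E1 x p -> path_in V2 E2 x p ->
    V1 = V2 /\ E1 = E2.
Proof.
move=> _ last_p m1 m2 V1 V2 E1 E2 [phi1 [inj1 -> [-> edges1] phi1_0 phi1_T]]
  [phi2 [inj2 -> [-> edges2] phi2_0 phi2_T]] path1 path2.
have [m1p [s1 chain1]] := cube_maximal_path inj1 phi1_0 phi1_T path1 last_p.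
have [m2p [s2 chain2]] := cube_maximal_path inj2 phi2_0 phi2_T path2 last_p.
subst m1 m2.
have phi12 : forall A : {set 'I_(size p)}, phi1 (s1 @: A) = phi2 (s2 @: A).
  apply: bruhat_cube_maps_eq.
  - exact: injective_relabel.
  - exact: injective_relabel.
  - exact: bruhat_cube_map_relabel (bruhat_cube_map_edges edges1).
  - exact: bruhat_cube_map_relabel (bruhat_cube_map_edges edges2).
  - by move=> k km; rewrite chain1 // chain2.
change (cube_vertices phi1 = cube_vertices phi2 /\ cube_edges phi1 = cube_edges phi2).
rewrite -(cube_vertices_relabel phi1 s1) -(cube_vertices_relabel phi2 s2).
rewrite -(cube_edges_relabel phi1 s1) -(cube_edges_relabel phi2 s2).
split; first exact: eq_imset.
by apply/setP => uv; apply/imset2P/imset2P => -[A a _ aA ->]; exists A a; rewrite ?phi12.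
Qed.
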